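(* Let $\mathsf{P}$ be a stratified program of $\mathcal{H}$. Then its well-founded Herbrand interpretation $\mathcal{M}_\mathsf{P}$ (the Herbrand interpretation whose valuation function is the well-founded model of $\mathsf{Gr(P)}$) is extensional.
   Context: Types of $\mathcal{H}$: base types $\iota$ and $o$; predicate types $\pi::=o\mid\rho\to\pi$; argument types $\rho::=\iota\mid\pi$; every predicate type has the form $\rho_1\to\cdots\to\rho_n\to o$. Terms are built from predicate/individual variables and constants and function symbols (of types $\iota^n\to\iota$) by typed application; atoms are terms of type $o$; literals are atoms, equalities $(\mathsf{E}_1\approx\mathsf{E}_2)$ between terms of type $\iota$, and negated atoms $\sim\mathsf{E}$. A clause is $\mathsf{p}\,\mathsf{V}_1\cdots\mathsf{V}_n\leftarrow\mathsf{L}_1,\dots,\mathsf{L}_m$ with $\mathsf{p}$ a predicate constant of type $\rho_1\to\cdots\to\rho_n\to o$, $\mathsf{V}_i$ distinct variables of types $\rho_i$, $\mathsf{L}_j$ literals; a program is a finite set of clauses. Stratified: a predicate type $\pi$ is greater than $\pi'$ if $\pi=\rho_1\to\cdots\to\rho_n\to\pi'$ with $n\ge1$. $\mathsf{P}$ is stratified if the set of predicate constants appearing in $\mathsf{P}$ can be partitioned into finitely many sets $S_1,\dots,S_r$ (with $\mathit{stratum}(\mathsf{r})=i$ iff $\mathsf{r}\in S_i$) such that for every clause $\mathsf{H}\leftarrow\mathsf{A}_1,\dots,\mathsf{A}_m,\sim\mathsf{B}_1,\dots,\sim\mathsf{B}_n$ of $\mathsf{P}$ whose head has predicate constant $\mathsf{p}$: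 (1) if $\mathsf{A}_i$ is a term starting with a predicate constant $\mathsf{q}$, then $\mathit{stratum}(\mathsf{q})\le\mathit{stratum}(\mathsf{p})$; (2) if $\mathsf{A}_i$ is a term starting with a predicate variable $\mathsf{Q}$, then $\mathit{stratum}(\mathsf{q})\le\mathit{stratum}(\mathsf{p})$ for every predicate constant $\mathsf{q}$ of $\mathsf{P}$ whose type is greater than or equal to the type of $\mathsf{Q}$; (3) if $\mathsf{B}_i$ starts with a predicate constant $\mathsf{q}$, then $\mathit{stratum}(\mathsf{q})<\mathit{stratum}(\mathsf{p})$; (4) if $\mathsf{B}_i$ starts with a predicate variable $\mathsf{Q}$, then $\mathit{stratum}(\mathsf{q})<\mathit{stratum}(\mathsf{p})$ for every predicate constant $\mathsf{q}$ of $\mathsf{P}$ whose type is greater than or equal to the type of $\mathsf{Q}$. Semantics: $U_{\mathsf{P},\rho}$ is the set of ground terms of type $\rho$ built from the symbols of $\mathsf{P}$; $\mathsf{Gr(P)}$ is the set of all clauses obtained from clauses of $\mathsf{P}$ by substituting for each variable an element of $U_{\mathsf{P},\rho}$ of its type, regarded as a propositional program on the ground atoms (ground equalities being the constants true/false according to syntactic identity). $\mathcal{M}_\mathsf{P}$ is the Herbrand interpretation of $\mathsf{P}$ (symbols interpreted by themselves, application syntactic) whose valuation $v$ gives each ground atom its truth value ($\mathit{false},0,\mathit{true}$) in the well-founded model of $\mathsf{Gr(P)}$. Extensional equality: for argument type $\rho$, $\cong_{v,\rho}$ on $U_{\mathsf{P},\rho}$ is defined by: for $\rho=\iota$, syntactic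 equality; for $\rho=o$, $d\cong d'$ iff $v(d)=v(d')$; for $\rho=\rho'\to\pi$, $d\cong d'$ iff $(d\,e)\cong_{v,\pi}(d'\,e')$ for all $e,e'\in U_{\mathsf{P},\rho'}$ with $e\cong_{v,\rho'}e'$. An interpretation with valuation $v$ is extensional if $\cong_{v,\rho}$ is reflexive for every argument type $\rho$. *)

From Stdlib Require Import List ClassicalEpsilon.
Import ListNotations.

Inductive ty : Type := TI | TO | TArr (r p : ty).

Inductive is_pred : ty -> Prop :=
| pred_O : is_pred TO
| pred_Arr : forall r p, is_arg r -> is_pred p -> is_pred (TArr r p)
with is_arg : ty -> Prop :=
| arg_I : is_arg TI
| arg_P : forall p, is_pred p -> is_arg p.

Definition ty_ge (pi pi' : ty) : Prop :=
  exists rs : list ty, pi = fold_right TArr pi' rs.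

(* Variables and predicate constants carry their type (a symbol is a
   (name, type) pair).  Function symbols of type iota^n -> iota are
   applied to their n arguments; a function symbol is the pair
   (name, arity). *)
Inductive term : Type :=
| Var (x : nat) (t : ty)
| IConst (c : nat)
| PConst (p : nat) (t : ty)
| Fun (f : nat) (args : list term)
| App (e1 e2 : term).

Inductive wt : term -> ty -> Prop :=
| wt_Var : forall x t, is_arg t -> wt (Var x t) t
| wt_IConst : forall c, wt (IConst c) TI
| wt_PConst : forall p t, is_pred t -> wt (PConst p t) t
| wt_Fun : forall f args, (forall a, In a args -> wt a TI) -> wt (Fun f args) TI
| wt_App : forall e1 e2 r p, wt e1 (TArr r p) -> wt e2 r -> wt (App e1 e2) p.

Inductive sym : Type :=
| SVar (x : nat) (t : ty)
| SIC (c : nat)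
| SPC (p : nat) (t : ty)
| SFun (f : nat) (arity : nat).

Fixpoint syms (e : term) : list sym :=
  match e with
  | Var x t => [SVar x t]
  | IConst c => [SIC c]
  | PConst p t => [SPC p t]
  | Fun f args => SFun f (length args) :: concat (map syms args)
  | App a b => syms a ++ syms b
  end.

Definition closed (e : term) : Prop := forall x t, ~ In (SVar x t) (syms e).

Fixpoint subst (s : nat -> ty -> term) (e : term) : term :=
  match e with
  | Var x t => s x t
  | IConst c => IConst c
  | PConst p t => PConst p t
  | Fun f args => Fun f (map (subst s) args)
  | App a b => App (subst s a) (subst s b)
  end.

Fixpoint head (e : term) : term :=
  match e with
  | App a _ => head a
  | _ => e
  end.

Inductive literal : Type :=
| LPos (A : term)
| LEq (E1 E2 : term)
| LNeg (A : term).

Definition lit_syms (l : literal) : list sym :=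
  match l with
  | LPos A => syms A
  | LEq E1 E2 => syms E1 ++ syms E2
  | LNeg A => syms A
  end.

Definition wt_lit (l : literal) : Prop :=
  match l with
  | LPos A => wt A TO
  | LEq E1 E2 => wt E1 TI /\ wt E2 TI
  | LNeg A => wt A TO
  end.

(* clause  p V_1 ... V_n <- L_1, ..., L_m  *)
Record clause : Type := mkClause {
  c_head : nat;
  c_hvars : list (nat * ty);
  c_body : list literal }.

Definition c_htype (c : clause) : ty := fold_right TArr TO (map snd (c_hvars c)).

Definition c_hconst (c : clause) : term := PConst (c_head c) (c_htype c).

Definition c_hatom (c : clause) : term :=
  fold_left (fun acc v => App acc (Var (fst v) (snd v))) (c_hvars c) (c_hconst c).

Definition clause_syms (c : clause) : list sym :=
  SPC (c_head c) (c_htype c)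
    :: map (fun v => SVar (fst v) (snd v)) (c_hvars c)
    ++ concat (map lit_syms (c_body c)).

Definition wf_clause (c : clause) : Prop :=
  NoDup (c_hvars c) /\
  (forall v, In v (c_hvars c) -> is_arg (snd v)) /\
  (forall l, In l (c_body c) -> wt_lit l).

Definition program := list clause.

Definition wf_program (P : program) : Prop := forall c, In c P -> wf_clause c.

Definition prog_syms (P : program) : list sym := concat (map clause_syms P).

Definition pconst_of (P : program) (q : nat) (t : ty) : Prop := In (SPC q t) (prog_syms P).

(* A partition into finitely many strata S_1..S_r is given by a function
   stratum on the (finitely many) predicate constants of P. *)
Definition stratified (P : program) : Prop :=
  exists stratum : nat -> ty -> nat,
  forall c, In c P ->
    let sp := stratum (c_head c) (c_htype c) in
    forall l, In l (c_body c) ->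
      match l with
      | LPos A =>
          (forall q t, head A = PConst q t -> stratum q t <= sp) /\
          (forall X tX, head A = Var X tX ->
             forall q t, pconst_of P q t -> ty_ge t tX -> stratum q t <= sp)
      | LNeg B =>
          (forall q t, head B = PConst q t -> stratum q t < sp) /\
          (forall X tX, head B = Var X tX ->
             forall q t, pconst_of P q t -> ty_ge t tX -> stratum q t < sp)
      | LEq _ _ => True
      end.

Definition U (P : program) (rho : ty) (d : term) : Prop :=
  wt d rho /\ closed d /\ (forall s, In s (syms d) -> In s (prog_syms P)).

(* ground literals of a propositional program over atoms A;
   GProp Q is the truth constant "true iff Q" *)
Inductive glit (A : Type) : Type :=
| GPos (a : A)
| GNeg (a : A)
| GProp (Q : Prop).
Arguments GPos {A}. Arguments GNeg {A}. Arguments GProp {A}.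

Definition ground_lit (s : nat -> ty -> term) (l : literal) : glit term :=
  match l with
  | LPos A => GPos (subst s A)
  | LNeg A => GNeg (subst s A)
  | LEq E1 E2 => GProp (subst s E1 = subst s E2)
  end.

Definition Gr (P : program) (a : term) (body : list (glit term)) : Prop :=
  exists c (s : nat -> ty -> term),
    In c P /\
    (forall x t, In (SVar x t) (clause_syms c) -> U P t (s x t)) /\
    a = subst s (c_hatom c) /\
    body = map (ground_lit s) (c_body c).

(* (Van Gelder, Ross, Schlipf): least fixpoint of W_P(I) = T_P(I) u ~U_P(I),
   with I = (Tr, Fa) a pair of sets of atoms. *)
Section WF.
Variable A : Type.
Variable rules : A -> list (glit A) -> Prop.

Definition glit_true (Tr Fa : A -> Prop) (l : glit A) : Prop :=
  match l with GPos b => Tr b | GNeg b => Fa b | GProp Q => Q end.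

Definition glit_false (Tr Fa : A -> Prop) (l : glit A) : Prop :=
  match l with GPos b => Fa b | GNeg b => Tr b | GProp Q => ~ Q end.

Definition TP (Tr Fa : A -> Prop) (a : A) : Prop :=
  exists body, rules a body /\ forall l, In l body -> glit_true Tr Fa l.

Definition unfounded (Tr Fa S : A -> Prop) : Prop :=
  forall a, S a -> forall body, rules a body ->
    exists l, In l body /\ (glit_false Tr Fa l \/ exists b, l = GPos b /\ S b).

Definition GUS (Tr Fa : A -> Prop) (a : A) : Prop :=
  exists S, unfounded Tr Fa S /\ S a.

Definition W_prefixed (Tr Fa : A -> Prop) : Prop :=
  (forall a, TP Tr Fa a -> Tr a) /\ (forall a, GUS Tr Fa a -> Fa a).

(* least fixpoint of the monotone operator W_P (Knaster-Tarski) *)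
Definition wf_true (a : A) : Prop := forall Tr Fa, W_prefixed Tr Fa -> Tr a.
Definition wf_false (a : A) : Prop := forall Tr Fa, W_prefixed Tr Fa -> Fa a.
End WF.

Inductive tval : Type := vfalse | vundef | vtrue.

Definition wf_model {A : Type} (rules : A -> list (glit A) -> Prop) (a : A) : tval :=
  if excluded_middle_informative (wf_true A rules a) then vtrue
  else if excluded_middle_informative (wf_false A rules a) then vfalse
  else vundef.

Definition M_val (P : program) : term -> tval := wf_model (Gr P).

Fixpoint ext_eq (P : program) (v : term -> tval) (rho : ty) (d d' : term) : Prop :=
  match rho with
  | TI => d = d'
  | TO => v d = v d'
  | TArr r p => forall e e', U P r e -> U P r e' -> ext_eq P v r e e' ->
                 ext_eq P v p (App d e) (App d' e')
  end.

Definition extensional (P : program) (v : term -> tval) : Prop :=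
  forall rho, is_arg rho -> forall d, U P rho d -> ext_eq P v rho d d.

(* Call two ground terms related if they are built by application from the
   diagonal and from extensionally equal pairs whose argument types are already
   known to be reflexive.  By induction on types, extensionality reduces to the
   well-founded valuation being invariant along related ground atoms.  For a
   stratified program the well-founded model is two-valued, so it is enough that
   truth is preserved; this goes by induction on strata and, inside a stratum, on
   the least-fixpoint construction.  A ground rule for p xs becomes one for p xs'
   by rebinding the head variables; its positive body atoms stay in the stratum
   of p, and its negated ones drop to lower strata, where falsity is preserved
   because there truth is preserved and the model is two-valued. *)

From Stdlib Require Import List Classical ClassicalEpsilon Lia Arith.
Import ListNotations.

Lemma wt_is_arg e t : wt e t -> is_arg t.
Proof.
  induction 1 as [x t Ht|c|p t Ht|f args _ _|e1 e2 r p _ IH1 _ _].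
  - exact Ht.
  - apply arg_I.
  - apply arg_P, Ht.
  - apply arg_I.
  - inversion IH1 as [|q Hq]; inversion Hq; subst. apply arg_P. assumption.
Qed.

Lemma wt_not_arrow_TI e r : ~ wt e (TArr r TI).
Proof.
  intros H. apply wt_is_arg in H. inversion H as [|p Hp]; subst.
  inversion Hp as [|r' p' _ HTI]; inversion HTI.
Qed.

Lemma wt_unique e t1 t2 : wt e t1 -> wt e t2 -> t1 = t2.
Proof.
  intros H. revert t2. induction H as [| | | f args _ _|e1 e2 r p _ IH1 _ _];
    intros t2 H2; inversion H2; subst; auto.
  match goal with H : wt e1 (TArr _ _) |- _ => specialize (IH1 _ H) end.
  congruence.
Qed.

Lemma ty_ge_arrow t r p : ty_ge t (TArr r p) -> ty_ge t p.
Proof.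
  intros [rs ->]. exists (rs ++ [r]). rewrite fold_right_app. reflexivity.
Qed.

Lemma ty_ge_TO_not_TI t : ty_ge t TO -> t <> TI.
Proof. intros [[|r rs] ->]; discriminate. Qed.

Definition apps (h : term) (xs : list term) : term := fold_left App xs h.

Lemma apps_app h xs ys : apps h (xs ++ ys) = apps (apps h xs) ys.
Proof. apply fold_left_app. Qed.

Lemma apps_snoc h xs x : apps h (xs ++ [x]) = App (apps h xs) x.
Proof. apply apps_app. Qed.

Lemma head_apps h xs : head (apps h xs) = head h.
Proof. revert h. induction xs as [|x xs IH]; intros h; [reflexivity|]. apply (IH (App h x)). Qed.

Lemma subst_apps s h xs : subst s (apps h xs) = apps (subst s h) (map (subst s) xs).
Proof. revert h. induction xs as [|x xs IH]; intros h; simpl; auto. Qed.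

Lemma apps_PConst_inj n t xs n' t' xs' :
  apps (PConst n t) xs = apps (PConst n' t') xs' -> n = n' /\ t = t' /\ xs = xs'.
Proof.
  revert xs'. induction xs as [|x xs IH] using rev_ind; intros xs' H;
    destruct xs' as [|x' xs' _] using rev_ind;
    rewrite ?apps_snoc in H; simpl in H; try discriminate.
  - injection H as -> ->. auto.
  - injection H as H ->. destruct (IH _ H) as (-> & -> & ->). auto.
Qed.

Lemma c_hatom_apps c :
  c_hatom c = apps (c_hconst c) (map (fun v => Var (fst v) (snd v)) (c_hvars c)).
Proof.
  unfold c_hatom, apps. generalize (c_hconst c).
  induction (c_hvars c) as [|v vs IH]; intros h; simpl; auto.
Qed.

Lemma subst_c_hatom s c :
  subst s (c_hatom c) =
  apps (PConst (c_head c) (c_htype c)) (map (fun v => s (fst v) (snd v)) (c_hvars c)).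
Proof. rewrite c_hatom_apps, subst_apps, map_map. reflexivity. Qed.

Lemma term_nested_ind (Q : term -> Prop) :
  (forall x t, Q (Var x t)) -> (forall c, Q (IConst c)) -> (forall p t, Q (PConst p t)) ->
  (forall f args, Forall Q args -> Q (Fun f args)) ->
  (forall a b, Q a -> Q b -> Q (App a b)) ->
  forall e, Q e.
Proof.
  intros HV HI HP HF HA. fix IH 1. intros [x t|c|p t|f args|a b].
  - apply HV.
  - apply HI.
  - apply HP.
  - apply HF. induction args as [|a args IHargs]; constructor; [apply IH | exact IHargs].
  - apply HA; apply IH.
Qed.

Lemma syms_Fun_arg f args a z : In a args -> In z (syms a) -> In z (syms (Fun f args)).
Proof.
  intros Ha Hz. right. apply in_concat. exists (syms a). split; [apply in_map|]; assumption.
Qed.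

Lemma head_var_syms e x t : head e = Var x t -> In (SVar x t) (syms e).
Proof.
  induction e; simpl; intros H; try discriminate.
  - injection H as -> ->. left. reflexivity.
  - apply in_or_app. left. auto.
Qed.

Lemma head_PConst_syms e q t : head e = PConst q t -> In (SPC q t) (syms e).
Proof.
  induction e; simpl; intros H; try discriminate.
  - injection H as -> ->. left. reflexivity.
  - apply in_or_app. left. auto.
Qed.

Lemma head_subst_PConst s e q t : head e = PConst q t -> head (subst s e) = PConst q t.
Proof. induction e; simpl; intros H; try discriminate; auto. Qed.

Lemma head_subst_Var s e x t : head e = Var x t -> head (subst s e) = head (s x t).
Proof. induction e; simpl; intros H; try discriminate; auto. injection H as -> ->. reflexivity. Qed.

Lemma wt_head e tau : wt e tau -> tau <> TI ->
  (exists x t, head e = Var x t /\ ty_ge t tau) \/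
  (exists q t, head e = PConst q t /\ ty_ge t tau).
Proof.
  induction 1 as [x t _|c|p t _|f args _ _|e1 e2 r p _ IH1 _ _]; intros Hne;
    try congruence.
  - left. exists x, t. split; [|exists []]; reflexivity.
  - right. exists p, t. split; [|exists []]; reflexivity.
  - destruct IH1 as [(x & t & Hh & Hge)|(q & t & Hh & Hge)]; [discriminate| |].
    + left. exists x, t. split; [exact Hh|]. eapply ty_ge_arrow; eauto.
    + right. exists q, t. split; [exact Hh|]. eapply ty_ge_arrow; eauto.
Qed.

Section HerbrandUniverse.
Variable P : program.

Lemma U_IConst c : In (SIC c) (prog_syms P) -> U P TI (IConst c).
Proof.
  intros Hc. split; [constructor|split].
  - intros x t [H|[]]. discriminate.
  - intros z [<-|[]]. exact Hc.
Qed.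

Lemma U_PConst q t : is_pred t -> In (SPC q t) (prog_syms P) -> U P t (PConst q t).
Proof.
  intros Ht Hq. split; [constructor; exact Ht|split].
  - intros x t' [H|[]]. discriminate.
  - intros z [<-|[]]. exact Hq.
Qed.

Lemma U_Fun f args : In (SFun f (length args)) (prog_syms P) ->
  (forall a, In a args -> U P TI a) -> U P TI (Fun f args).
Proof.
  intros Hf Hargs. split; [|split].
  - constructor. intros a Ha. apply Hargs, Ha.
  - intros x t [H|H]; [discriminate|].
    apply in_concat in H as (l & Hl & H). apply in_map_iff in Hl as (a & <- & Ha).
    apply (proj1 (proj2 (Hargs a Ha)) x t H).
  - intros z [<-|H]; [exact Hf|].
    apply in_concat in H as (l & Hl & H). apply in_map_iff in Hl as (a & <- & Ha).
    apply (proj2 (proj2 (Hargs a Ha)) z H).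
Qed.

Lemma U_app r p d e : U P (TArr r p) d -> U P r e -> U P p (App d e).
Proof.
  intros (Hd & Hdc & Hds) (He & Hec & Hes). split; [|split].
  - econstructor; eassumption.
  - intros x t Hin. apply in_app_or in Hin as [Hin|Hin]; [eapply Hdc|eapply Hec]; eauto.
  - intros z Hin. apply in_app_or in Hin as [Hin|Hin]; auto.
Qed.

Lemma U_app_inv p d e : U P p (App d e) -> exists r, U P (TArr r p) d /\ U P r e.
Proof.
  intros (Hw & Hc & Hs). inversion Hw as [| | | |? ? r ? Hd He]; subst.
  exists r. split; (split; [assumption|split]);
    [intros x t Hin; apply (Hc x t) | intros z Hin; apply Hs
    |intros x t Hin; apply (Hc x t) | intros z Hin; apply Hs];
    simpl; apply in_or_app; auto.
Qed.

Lemma U_subst s e tau : wt e tau ->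
  (forall z, In z (syms e) -> In z (prog_syms P)) ->
  (forall x t, In (SVar x t) (syms e) -> U P t (s x t)) ->
  U P tau (subst s e).
Proof.
  revert tau. induction e as [x t|c|q t|f args IH|a b IHa IHb] using term_nested_ind;
    intros tau Hw Hs Hv; inversion Hw; subst; simpl.
  - apply Hv. left. reflexivity.
  - apply U_IConst, Hs. left. reflexivity.
  - apply U_PConst; [assumption|]. apply Hs. left. reflexivity.
  - apply U_Fun.
    + rewrite length_map. apply Hs. left. reflexivity.
    + intros a' Ha'. apply in_map_iff in Ha' as (a & <- & Ha).
      rewrite Forall_forall in IH. apply IH; auto.
      * intros z Hz. apply Hs. eapply syms_Fun_arg; eauto.
      * intros x t Hx. apply Hv. eapply syms_Fun_arg; eauto.
  - eapply U_app; [apply IHa|apply IHb]; try eassumption;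
      intros; [apply Hs|apply Hv|apply Hs|apply Hv]; apply in_or_app; auto.
Qed.

Lemma U_head d tau : U P tau d -> tau <> TI ->
  exists q t, head d = PConst q t /\ ty_ge t tau /\ pconst_of P q t.
Proof.
  intros (Hw & Hc & Hs) Hne.
  destruct (wt_head d tau Hw Hne) as [(x & t & Hh & _)|(q & t & Hh & Hge)].
  - exfalso. apply (Hc x t), head_var_syms, Hh.
  - exists q, t. split; [|split]; auto. apply Hs, head_PConst_syms, Hh.
Qed.

Lemma U_spine d tau : U P tau d -> tau <> TI ->
  exists q t xs, d = apps (PConst q t) xs /\ Forall (fun x => exists rho, U P rho x) xs.
Proof.
  revert tau. induction d as [x t|c|q t|f args|a IHa b _]; intros tau Hd Hne.
  - exfalso. apply (proj1 (proj2 Hd) x t). left. reflexivity.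
  - destruct Hd as [Hw _]. inversion Hw. congruence.
  - exists q, t, []. auto.
  - destruct Hd as [Hw _]. inversion Hw. congruence.
  - apply U_app_inv in Hd as (r & Ha & Hb).
    destruct (IHa _ Ha ltac:(discriminate)) as (q & t & xs & -> & Hxs).
    exists q, t, (xs ++ [b]). split.
    + symmetry. apply apps_snoc.
    + apply Forall_app. split; [exact Hxs|]. constructor; eauto.
Qed.

End HerbrandUniverse.

Section WellFoundedModel.
Variable A : Type.
Variable rules : A -> list (glit A) -> Prop.
Notation T := (wf_true A rules).
Notation F := (wf_false A rules).

Lemma glit_true_mono (T1 F1 T2 F2 : A -> Prop) l :
  (forall a, T1 a -> T2 a) -> (forall a, F1 a -> F2 a) ->
  glit_true A T1 F1 l -> glit_true A T2 F2 l.
Proof. destruct l; simpl; auto. Qed.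

Lemma glit_false_mono (T1 F1 T2 F2 : A -> Prop) l :
  (forall a, T1 a -> T2 a) -> (forall a, F1 a -> F2 a) ->
  glit_false A T1 F1 l -> glit_false A T2 F2 l.
Proof. destruct l; simpl; auto. Qed.

Lemma TP_mono (T1 F1 T2 F2 : A -> Prop) a :
  (forall b, T1 b -> T2 b) -> (forall b, F1 b -> F2 b) ->
  TP A rules T1 F1 a -> TP A rules T2 F2 a.
Proof.
  intros HT HF (body & Hr & Hbody). exists body. split; [exact Hr|].
  intros l Hl. eapply glit_true_mono; eauto.
Qed.

Lemma GUS_mono (T1 F1 T2 F2 : A -> Prop) a :
  (forall b, T1 b -> T2 b) -> (forall b, F1 b -> F2 b) ->
  GUS A rules T1 F1 a -> GUS A rules T2 F2 a.
Proof.
  intros HT HF (S & HS & Ha). exists S. split; [|exact Ha].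
  intros b Hb body Hr. destruct (HS b Hb body Hr) as (l & Hl & [Hf|Hpos]).
  - exists l. split; [exact Hl|]. left. eapply glit_false_mono; eauto.
  - exists l. auto.
Qed.

Lemma wf_prefixed : W_prefixed A rules T F.
Proof.
  split; intros a Ha Tr Fa Hpre; [apply (proj1 Hpre) | apply (proj2 Hpre)].
  - eapply TP_mono; [| |exact Ha]; intros b Hb; apply (Hb Tr Fa Hpre).
  - eapply GUS_mono; [| |exact Ha]; intros b Hb; apply (Hb Tr Fa Hpre).
Qed.

Lemma wf_true_TP a : TP A rules T F a -> T a.
Proof. apply (proj1 wf_prefixed). Qed.

Lemma unfounded_wf_false S : unfounded A rules T F S -> forall a, S a -> F a.
Proof. intros HS a Ha. apply (proj2 wf_prefixed). exists S. auto. Qed.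

(* (TP, GUS) applied to the least prefixed point is again prefixed. *)
Lemma wf_false_GUS a : F a -> GUS A rules T F a.
Proof.
  intros Ha. apply (Ha (TP A rules T F) (GUS A rules T F)). split; intros b Hb.
  - eapply TP_mono; [| |exact Hb]; apply wf_prefixed.
  - eapply GUS_mono; [| |exact Hb]; apply wf_prefixed.
Qed.

Lemma wf_true_ind (Q : A -> Prop) :
  (forall a, TP A rules (fun b => T b /\ Q b) F a -> Q a) ->
  forall a, T a -> Q a.
Proof.
  intros HQ a Ha. enough (H : W_prefixed A rules (fun b => T b /\ Q b) F) by apply (Ha _ _ H).
  split; intros b Hb.
  - split; [|apply HQ, Hb].
    apply wf_true_TP. eapply TP_mono; [| |exact Hb]; [intros c []|]; auto.
  - apply (proj2 wf_prefixed). eapply GUS_mono; [| |exact Hb]; [intros c []|]; auto.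
Qed.

Lemma wf_model_true a : wf_model rules a = vtrue <-> T a.
Proof.
  unfold wf_model.
  destruct (excluded_middle_informative (T a)); [tauto|].
  destruct (excluded_middle_informative (F a)); split; (discriminate || tauto).
Qed.

Lemma wf_model_ext a a' : (T a <-> T a') -> (F a <-> F a') ->
  wf_model rules a = wf_model rules a'.
Proof.
  intros HT HF. unfold wf_model.
  destruct (excluded_middle_informative (T a)), (excluded_middle_informative (T a'));
    try tauto;
  destruct (excluded_middle_informative (F a)), (excluded_middle_informative (F a'));
    tauto.
Qed.

End WellFoundedModel.

(* [stratified P] is [exists stratum, stratification P stratum]. *)
Definition stratification (P : program) (stratum : nat -> ty -> nat) : Prop :=
  forall c, In c P ->
    let sp := stratum (c_head c) (c_htype c) in
    forall l, In l (c_body c) ->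
      match l with
      | LPos A =>
          (forall q t, head A = PConst q t -> stratum q t <= sp) /\
          (forall X tX, head A = Var X tX ->
             forall q t, pconst_of P q t -> ty_ge t tX -> stratum q t <= sp)
      | LNeg B =>
          (forall q t, head B = PConst q t -> stratum q t < sp) /\
          (forall X tX, head B = Var X tX ->
             forall q t, pconst_of P q t -> ty_ge t tX -> stratum q t < sp)
      | LEq _ _ => True
      end.

Definition atom_stratum (stratum : nat -> ty -> nat) (a : term) : nat :=
  match head a with PConst q t => stratum q t | _ => 0 end.

Lemma atom_stratum_apps stratum q t xs :
  atom_stratum stratum (apps (PConst q t) xs) = stratum q t.
Proof. unfold atom_stratum. rewrite head_apps. reflexivity. Qed.

Lemma clause_syms_lit c l z : In l (c_body c) -> In z (lit_syms l) -> In z (clause_syms c).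
Proof.
  intros Hl Hz. right. apply in_or_app. right.
  apply in_concat. exists (lit_syms l). split; [apply in_map|]; assumption.
Qed.

Lemma prog_syms_clause P c z : In c P -> In z (clause_syms c) -> In z (prog_syms P).
Proof.
  intros Hc Hz. apply in_concat. exists (clause_syms c). split; [apply in_map|]; assumption.
Qed.

Section Stratified.
Variable P : program.
Variable stratum : nat -> ty -> nat.
Hypothesis wfP : wf_program P.
Hypothesis stratP : stratification P stratum.
Notation str := (atom_stratum stratum).
Notation T := (wf_true term (Gr P)).
Notation F := (wf_false term (Gr P)).

(* A variable head of type tX is instantiated by a ground term whose head is a
   predicate constant of type >= tX: this is what clauses (2) and (4) of
   stratification control. *)
Lemma atom_stratum_subst c s A (Q : nat -> Prop) :
  (forall x t, In (SVar x t) (clause_syms c) -> U P t (s x t)) ->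
  (forall z, In z (syms A) -> In z (clause_syms c)) ->
  wt A TO ->
  (forall q t, head A = PConst q t -> Q (stratum q t)) ->
  (forall X tX, head A = Var X tX ->
     forall q t, pconst_of P q t -> ty_ge t tX -> Q (stratum q t)) ->
  Q (str (subst s A)).
Proof.
  intros Hs Hsyms Hw HPConst HVar. unfold atom_stratum.
  destruct (wt_head A TO Hw ltac:(discriminate)) as [(x & t & Hh & Hge)|(q & t & Hh & _)].
  - rewrite (head_subst_Var s A x t Hh).
    assert (Hx : U P t (s x t)) by (apply Hs, Hsyms, head_var_syms, Hh).
    destruct (U_head P _ _ Hx (ty_ge_TO_not_TI t Hge)) as (q & t' & -> & Hge' & Hq).
    eapply HVar; eauto.
  - rewrite (head_subst_PConst s A q t Hh). apply HPConst, Hh.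
Qed.

Lemma Gr_stratum a body : Gr P a body ->
  (forall b, In (GPos b) body -> str b <= str a) /\
  (forall b, In (GNeg b) body -> str b < str a).
Proof.
  intros (c & s & Hc & Hs & -> & ->).
  rewrite subst_c_hatom, atom_stratum_apps. destruct (wfP c Hc) as (_ & _ & Hwt).
  split; intros b Hb; apply in_map_iff in Hb as ([A|E1 E2|A] & Hb & Hl);
    simpl in Hb; try discriminate; injection Hb as <-;
    destruct (stratP c Hc _ Hl) as [HPConst HVar];
    (eapply atom_stratum_subst; [exact Hs| |exact (Hwt _ Hl)|exact HPConst|exact HVar]);
    intros z Hz; eapply clause_syms_lit; eauto.
Qed.

(* The atoms of stratum <= k that are not true form an unfounded set. *)
Lemma wf_total a : T a \/ F a.
Proof.
  enough (H : forall k a, str a <= k -> T a \/ F a) by exact (H _ a (le_n _)).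
  clear a. intros k. induction k as [k IH] using lt_wf_ind. intros a Ha.
  destruct (classic (T a)) as [HT|HT]; [left; exact HT|right].
  apply (unfounded_wf_false term (Gr P) (fun b => str b <= k /\ ~ T b)); [|auto].
  intros b [Hbk HbT] body Hr. apply NNPP. intros Hnone. apply HbT, wf_true_TP.
  exists body. split; [exact Hr|].
  destruct (Gr_stratum b body Hr) as [Hpos Hneg].
  intros [c|c|Q] Hl; simpl; apply NNPP; intros Hc; apply Hnone; eexists; split; try exact Hl.
  - right. exists c. split; [reflexivity|]. split; [specialize (Hpos c Hl); lia|exact Hc].
  - left. specialize (Hneg c Hl).
    destruct (IH (str c) ltac:(lia) c (le_n _)) as [HTc|HFc]; [exact HTc|contradiction].
  - left. exact Hc.
Qed.

Lemma wf_consistent a : ~ (T a /\ F a).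
Proof.
  enough (H : forall k a, str a <= k -> ~ (T a /\ F a)) by exact (H _ a (le_n _)).
  clear a. intros k. induction k as [k IH] using lt_wf_ind. intros a Ha [HT HF].
  revert a HT Ha HF. apply (wf_true_ind term (Gr P) (fun b => str b <= k -> ~ F b)).
  intros b (body & Hr & Hbody) Hbk HFb.
  destruct (wf_false_GUS term (Gr P) b HFb) as (S & HS & HSb).
  destruct (HS b HSb body Hr) as (l & Hl & Hfalse).
  destruct (Gr_stratum b body Hr) as [Hpos Hneg].
  specialize (Hbody l Hl).
  destruct l as [c|c|Q]; simpl in Hbody, Hfalse.
  - destruct Hbody as [HTc HQc]. apply HQc; [specialize (Hpos c Hl); lia|].
    destruct Hfalse as [HFc|(c' & Heq & HSc)]; [exact HFc|].
    injection Heq as <-. eapply unfounded_wf_false; eauto.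
  - destruct Hfalse as [HTc|(c' & Heq & _)]; [|discriminate].
    specialize (Hneg c Hl). apply (IH (str c) ltac:(lia) c (le_n _)). auto.
  - destruct Hfalse as [HnQ|(c' & Heq & _)]; [|discriminate]. auto.
Qed.

End Stratified.

Fixpoint args_of (t : ty) : list ty :=
  match t with TArr r p => r :: args_of p | _ => [] end.

Inductive args_rel (R : ty -> term -> term -> Prop) : ty -> ty -> list term -> list term -> Prop :=
| args_rel_nil tau : args_rel R tau tau [] []
| args_rel_cons r p tau u u' us us' :
    R r u u' -> args_rel R p tau us us' -> args_rel R (TArr r p) tau (u :: us) (u' :: us').

Lemma args_rel_snoc R pi r p us us' u u' :
  args_rel R pi (TArr r p) us us' -> R r u u' -> args_rel R pi p (us ++ [u]) (us' ++ [u']).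
Proof.
  intros H Hu. remember (TArr r p) as rp eqn:Hrp.
  induction H; subst; simpl; repeat econstructor; eauto.
Qed.

Section ExtensionalClosure.
Variable P : program.
Variable v : term -> tval.

Definition args_refl (pi : ty) : Prop :=
  forall r, In r (args_of pi) -> forall x, U P r x -> ext_eq P v r x x.

Inductive ext_rel : ty -> term -> term -> Prop :=
| ext_rel_base pi d d' : U P pi d -> U P pi d' -> ext_eq P v pi d d' -> args_refl pi ->
    ext_rel pi d d'
| ext_rel_refl tau d : U P tau d -> ext_rel tau d d
| ext_rel_app r p d1 d1' d2 d2' : ext_rel (TArr r p) d1 d1' -> ext_rel r d2 d2' ->
    ext_rel p (App d1 d2) (App d1' d2').

Definition ext_related (d d' : term) : Prop := exists rho, ext_rel rho d d'.

Lemma ext_rel_U tau d d' : ext_rel tau d d' -> U P tau d /\ U P tau d'.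
Proof.
  induction 1 as [| |r p d1 d1' d2 d2' _ [] _ []]; auto.
  split; eapply U_app; eauto.
Qed.

Lemma ext_rel_TI d d' : ext_rel TI d d' -> d = d'.
Proof.
  intros H. remember TI as t eqn:Ht.
  destruct H as [pi d d' _ _ Hdd' _|tau d _|r p d1 d1' d2 d2' H1 _]; subst.
  - exact Hdd'.
  - reflexivity.
  - exfalso. apply ext_rel_U in H1 as [[Hw _] _]. exact (wt_not_arrow_TI _ _ Hw).
Qed.

Lemma ext_eq_sym tau d d' : ext_eq P v tau d d' -> ext_eq P v tau d' d.
Proof.
  revert d d'. induction tau; simpl; intros d d' H; auto.
Qed.

Lemma ext_rel_sym tau d d' : ext_rel tau d d' -> ext_rel tau d' d.
Proof.
  induction 1.
  - apply ext_rel_base; auto. apply ext_eq_sym; assumption.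
  - apply ext_rel_refl; assumption.
  - eapply ext_rel_app; eauto.
Qed.

Lemma Forall2_ext_related_refl xs :
  Forall (fun x => exists rho, U P rho x) xs -> Forall2 ext_related xs xs.
Proof.
  induction 1 as [|x xs [rho Hx]]; constructor; [exists rho; apply ext_rel_refl, Hx|assumption].
Qed.

Lemma args_rel_Forall2 pi tau us us' :
  args_rel ext_rel pi tau us us' -> Forall2 ext_related us us'.
Proof. induction 1; constructor; [eexists|]; eauto. Qed.

Lemma ext_rel_inv tau d d' : ext_rel tau d d' -> tau <> TI ->
  (exists q t xs xs', d = apps (PConst q t) xs /\ d' = apps (PConst q t) xs' /\
      Forall2 ext_related xs xs') \/
  (exists pi b b' us us', U P pi b /\ U P pi b' /\ ext_eq P v pi b b' /\ args_refl pi /\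
      d = apps b us /\ d' = apps b' us' /\ args_rel ext_rel pi tau us us').
Proof.
  induction 1 as [pi d d' Hd Hd' Hdd' Hpi|tau d Hd|r p d1 d1' d2 d2' _ IH1 H2 _];
    intros Hne.
  - right. exists pi, d, d', [], [].
    repeat (split; [eassumption|]). repeat (split; [reflexivity|]). constructor.
  - left. destruct (U_spine P d tau Hd Hne) as (q & t & xs & -> & Hxs).
    exists q, t, xs, xs. repeat (split; [reflexivity|]). apply Forall2_ext_related_refl, Hxs.
  - destruct (IH1 ltac:(discriminate)) as
      [(q & t & xs & xs' & -> & -> & Hxs)
      |(pi & b & b' & us & us' & Hb & Hb' & Hbb' & Hpi & -> & -> & Hus)].
    + left. exists q, t, (xs ++ [d2]), (xs' ++ [d2']). rewrite !apps_snoc.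
      repeat (split; [reflexivity|]). apply Forall2_app; [exact Hxs|].
      repeat constructor. eexists; eauto.
    + right. exists pi, b, b', (us ++ [d2]), (us' ++ [d2']). rewrite !apps_snoc.
      repeat (split; [eassumption|]). repeat (split; [reflexivity|]).
      eapply args_rel_snoc; eauto.
Qed.

Lemma ext_eq_apps_r pi tau b b' us us' :
  U P pi b -> U P pi b' -> ext_eq P v pi b b' -> args_refl pi ->
  args_rel ext_rel pi tau us us' -> ext_eq P v tau (apps b us') (apps b' us').
Proof.
  intros Hb Hb' Hbb' Hpi Hus. revert b b' Hb Hb' Hbb'.
  induction Hus as [|r p tau u u' us us' Hu _ IH]; intros b b' Hb Hb' Hbb'; simpl; auto.
  apply ext_rel_U in Hu as [_ Hu'].
  apply IH; try (eapply U_app; eassumption).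
  - intros s Hs. apply Hpi. right. exact Hs.
  - apply Hbb'; auto. apply Hpi; [left|]; auto.
Qed.

Lemma ext_rel_subst s s' e tau : wt e tau ->
  (forall z, In z (syms e) -> In z (prog_syms P)) ->
  (forall x t, In (SVar x t) (syms e) -> ext_rel t (s x t) (s' x t)) ->
  ext_rel tau (subst s e) (subst s' e).
Proof.
  revert tau. induction e as [x t|c|q t|f args IH|a b IHa IHb] using term_nested_ind;
    intros tau Hw Hs Hv;
    assert (HU : U P tau (subst s _)) by
      (apply U_subst; [exact Hw|exact Hs|intros x' t' Hx; apply (ext_rel_U _ _ _ (Hv x' t' Hx))]);
    inversion Hw; subst; simpl in *.
  - apply Hv. left. reflexivity.
  - apply ext_rel_refl, HU.
  - apply ext_rel_refl, HU.
  - replace (map (subst s') args) with (map (subst s) args); [apply ext_rel_refl, HU|].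
    apply map_ext_in. intros a Ha. rewrite Forall_forall in IH.
    apply ext_rel_TI, IH; auto;
      intros; [apply Hs|apply Hv]; eapply syms_Fun_arg; eauto.
  - eapply ext_rel_app; [apply IHa|apply IHb]; try eassumption;
      intros; [apply Hs|apply Hv|apply Hs|apply Hv]; apply in_or_app; auto.
Qed.

End ExtensionalClosure.

Definition ty_eq_dec (t t' : ty) : {t = t'} + {t <> t'}.
Proof. decide equality. Defined.

Definition var_eq_dec (v w : nat * ty) : {v = w} + {v <> w}.
Proof. decide equality; [apply ty_eq_dec|apply Nat.eq_dec]. Defined.

Fixpoint rebind (hv : list (nat * ty)) (xs : list term) (s : nat -> ty -> term)
    (x : nat) (t : ty) : term :=
  match hv, xs with
  | w :: hv', y :: xs' => if var_eq_dec w (x, t) then y else rebind hv' xs' s x t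
  | _, _ => s x t
  end.

Lemma map_rebind hv xs s : NoDup hv -> length xs = length hv ->
  map (fun w => rebind hv xs s (fst w) (snd w)) hv = xs.
Proof.
  revert xs. induction hv as [|w hv IH]; intros [|y xs] Hnd Hlen; try discriminate; auto.
  inversion Hnd as [|? ? Hw Hnd']; subst. simpl.
  destruct (var_eq_dec w (fst w, snd w)) as [_|Hne]; [|destruct w; contradiction].
  f_equal. transitivity (map (fun w' => rebind hv xs s (fst w') (snd w')) hv);
    [|apply IH; [exact Hnd'|injection Hlen; auto]].
  apply map_ext_in. intros w' Hw'.
  destruct (var_eq_dec w (fst w', snd w')) as [Heq|]; [|reflexivity].
  destruct w'. simpl in Heq. subst. contradiction.
Qed.

Lemma ext_rel_rebind P v hv xs s x t :
  Forall2 (ext_related P v) (map (fun w => s (fst w) (snd w)) hv) xs ->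
  U P t (s x t) -> ext_rel P v t (s x t) (rebind hv xs s x t).
Proof.
  intros Hxs Hx. revert xs Hxs. induction hv as [|w hv IH]; intros xs Hxs; simpl in *.
  - apply ext_rel_refl, Hx.
  - inversion Hxs as [|? y ? xs' [rho Hy] Hxs']; subst.
    destruct (var_eq_dec w (x, t)) as [->|]; [|apply IH, Hxs'].
    pose proof (proj1 (proj1 (ext_rel_U _ _ _ _ _ Hy))) as Hw.
    simpl in Hw. rewrite (wt_unique _ _ _ Hw (proj1 Hx)) in Hy. exact Hy.
Qed.

Section Extensionality.
Variable P : program.
Variable stratum : nat -> ty -> nat.
Hypothesis wfP : wf_program P.
Hypothesis stratP : stratification P stratum.
Notation str := (atom_stratum stratum).
Notation T := (wf_true term (Gr P)).
Notation F := (wf_false term (Gr P)).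
Notation v := (M_val P).

Lemma TP_transfer (T1 F1 T2 F2 : term -> Prop) q t xs xs' :
  TP term (Gr P) T1 F1 (apps (PConst q t) xs) ->
  Forall2 (ext_related P v) xs xs' ->
  (forall b b', ext_rel P v TO b b' ->
     str b <= stratum q t -> str b' <= stratum q t -> T1 b -> T2 b') ->
  (forall b b', ext_rel P v TO b b' ->
     str b < stratum q t -> str b' < stratum q t -> F1 b -> F2 b') ->
  TP term (Gr P) T2 F2 (apps (PConst q t) xs').
Proof.
  intros (body & Hgr & Hbody) Hxs HT HF.
  destruct (Gr_stratum P stratum wfP stratP _ _ Hgr) as [Hpos Hneg].
  destruct Hgr as (c & s & Hc & Hs & Hhead & ->).
  rewrite subst_c_hatom in Hhead.
  apply apps_PConst_inj in Hhead as (-> & -> & ->).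
  rewrite atom_stratum_apps in Hpos, Hneg.
  destruct (wfP c Hc) as (Hnd & _ & Hwt).
  set (s' := rebind (c_hvars c) xs' s).
  assert (Hss' : forall x t, In (SVar x t) (clause_syms c) -> ext_rel P v t (s x t) (s' x t))
    by (intros x t' Hx; apply ext_rel_rebind; auto).
  assert (Hgr' : Gr P (apps (PConst (c_head c) (c_htype c)) xs')
                      (map (ground_lit s') (c_body c))).
  { exists c, s'. split; [exact Hc|split; [|split; [|reflexivity]]].
    - intros x t' Hx. apply (ext_rel_U _ _ _ _ _ (Hss' x t' Hx)).
    - rewrite subst_c_hatom. f_equal. symmetry. apply map_rebind; [exact Hnd|].
      apply Forall2_length in Hxs. rewrite length_map in Hxs. auto. }
  exists (map (ground_lit s') (c_body c)). split; [exact Hgr'|].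
  destruct (Gr_stratum P stratum wfP stratP _ _ Hgr') as [Hpos' Hneg'].
  rewrite atom_stratum_apps in Hpos', Hneg'.
  intros l' Hl'. apply in_map_iff in Hl' as (l & <- & Hl).
  assert (Hrel : forall A tau, wt A tau -> (forall z, In z (syms A) -> In z (lit_syms l)) ->
                 ext_rel P v tau (subst s A) (subst s' A)).
  { intros A tau HA Hsub. apply ext_rel_subst; [exact HA| |].
    - intros z Hz. eapply prog_syms_clause, clause_syms_lit; eauto.
    - intros x t' Hx. apply Hss'. eapply clause_syms_lit; eauto. }
  pose proof (in_map (ground_lit s) _ _ Hl) as Hin.
  pose proof (in_map (ground_lit s') _ _ Hl) as Hin'.
  specialize (Hbody _ Hin). specialize (Hwt l Hl).
  destruct l as [A|E1 E2|A]; simpl in *.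
  - apply (HT (subst s A)); auto.
  - destruct Hwt as [Hw1 Hw2].
    rewrite <- (ext_rel_TI _ _ _ _ (Hrel E1 TI Hw1 ltac:(intros; apply in_or_app; auto))).
    rewrite <- (ext_rel_TI _ _ _ _ (Hrel E2 TI Hw2 ltac:(intros; apply in_or_app; auto))).
    exact Hbody.
  - apply (HF (subst s A)); auto.
Qed.

Definition T_stable (k : nat) (a : term) : Prop :=
  str a <= k -> forall a', ext_rel P v TO a a' -> T a'.

Lemma F_stable j : (forall a, T a -> T_stable j a) ->
  forall a a', ext_rel P v TO a a' -> str a' <= j -> F a -> F a'.
Proof.
  intros HT a a' Haa' Ha' HFa.
  destruct (wf_total P stratum wfP stratP a') as [HTa'|HFa']; [|exact HFa'].
  exfalso. apply (wf_consistent P stratum wfP stratP a). split; [|exact HFa].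
  apply (HT a' HTa' Ha'), ext_rel_sym, Haa'.
Qed.

Lemma T_stable_spine k : (forall j, j < k -> forall a, T a -> T_stable j a) ->
  forall q t xs xs', stratum q t <= k ->
  TP term (Gr P) (fun b => T b /\ T_stable k b) F (apps (PConst q t) xs) ->
  Forall2 (ext_related P v) xs xs' -> T (apps (PConst q t) xs').
Proof.
  intros IH q t xs xs' Hk HTP Hxs. apply wf_true_TP.
  apply (TP_transfer _ _ _ _ q t xs xs' HTP Hxs).
  - intros b b' Hbb' Hb _ [_ Hstable]. apply Hstable; [lia|exact Hbb'].
  - intros b b' Hbb' _ Hb' HFb.
    apply (F_stable _ (IH (pred (stratum q t)) ltac:(lia)) b b'); [exact Hbb'|lia|exact HFb].
Qed.

Lemma T_stable_all k : forall a, T a -> T_stable k a.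
Proof.
  induction k as [k IH] using lt_wf_ind.
  apply wf_true_ind. intros b Hb Hbk b' Hbb'.
  destruct (ext_rel_inv P v TO b b' Hbb' ltac:(discriminate)) as
    [(q & t & xs & xs' & -> & -> & Hxs)
    |(pi & b0 & b0' & us & us' & Hb0 & Hb0' & Hext & Hpi & -> & -> & Hus)].
  - rewrite atom_stratum_apps in Hbk. exact (T_stable_spine k IH q t xs xs' Hbk Hb Hxs).
  - assert (Hpi_TI : pi <> TI) by (intros ->; inversion Hus).
    destruct (U_spine P b0 pi Hb0 Hpi_TI) as (q & t & ws & -> & Hws).
    assert (HT : T (apps (PConst q t) (ws ++ us'))).
    { rewrite <- apps_app, atom_stratum_apps in Hbk. rewrite <- apps_app in Hb.
      apply (T_stable_spine k IH q t (ws ++ us)); [exact Hbk|exact Hb|].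
      apply Forall2_app; [apply Forall2_ext_related_refl, Hws|].
      eapply args_rel_Forall2; eauto. }
    pose proof (ext_eq_apps_r P v pi TO _ _ us us' Hb0 Hb0' Hext Hpi Hus) as Heq.
    apply (wf_model_true term (Gr P)). simpl in Heq. unfold M_val in Heq.
    rewrite <- Heq. apply wf_model_true. rewrite <- apps_app. exact HT.
Qed.

Lemma ext_rel_M_val a a' : ext_rel P v TO a a' -> v a = v a'.
Proof.
  intros Haa'. set (k := Nat.max (str a) (str a')).
  assert (Ha : str a <= k) by apply Nat.le_max_l.
  assert (Ha' : str a' <= k) by apply Nat.le_max_r.
  pose proof (T_stable_all k) as HT.
  apply wf_model_ext; split; intros H.
  - apply (HT a H Ha), Haa'.
  - apply (HT a' H Ha'), ext_rel_sym, Haa'.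
  - apply (F_stable k HT a a' Haa' Ha' H).
  - apply (F_stable k HT a' a (ext_rel_sym _ _ _ _ _ Haa') Ha H).
Qed.

(* [args_refl] is carried along so that the induction on types is structural:
   the base pairs at an argument type r need reflexivity at the arguments of r. *)
Lemma ext_rel_ext_eq rho :
  (forall d d', ext_rel P v rho d d' -> ext_eq P v rho d d') /\ args_refl P v rho.
Proof.
  induction rho as [| |r [IHr Hr] p [IHp Hp]].
  - split; [apply ext_rel_TI|intros _ []].
  - split; [apply ext_rel_M_val|intros _ []].
  - split.
    + intros d d' Hdd' e e' He He' Hee. apply IHp.
      eapply ext_rel_app; [exact Hdd'|]. apply ext_rel_base; assumption.
    + intros s [<-|Hs] x Hx; [apply IHr, ext_rel_refl, Hx|apply Hp; assumption].
Qed.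

End Extensionality.

Theorem theorem2 (P : program) :
  wf_program P -> stratified P -> extensional P (M_val P).
Proof.
  intros wfP [stratum stratP] rho _ d Hd.
  apply (proj1 (ext_rel_ext_eq P stratum wfP stratP rho)), ext_rel_refl, Hd.
Qed.
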